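(* Let $K$ be a division ring and $M,N\ge2$ integers. Suppose $G$ is a torsion-free group and $c,d\in K[G]$ of ranks $M$ and $N$ respectively both contain the identity of $G$ in their supports and satisfy $cd=1$. Write $c=r_0c_0+\dots+r_{M-1}c_{M-1}$ and $d=s_0d_0+\dots+s_{N-1}d_{N-1}$ with pairwise distinct $c_i\in G$, pairwise distinct $d_j\in G$, nonzero $r_i,s_j\in K$ and $c_0=d_0=1$. Let $\sigma$ be the partition of $\{0,\dots,M-1\}\times\{0,\dots,N-1\}$ with $(i,j)\sim_\sigma(i',j')$ iff $c_id_j=c_{i'}d_{j'}$, and let $\pi\le\sigma$ be any partition realizable with $r_0,\dots,r_{M-1},s_0,\dots,s_{N-1}$. Suppose that for all $(m,n)$ with $2\le m\le M$, $2\le n\le N$, $(m,n)\ne(M,N)$, there is no torsion-free group $G'$ and $x,y\in K[G']$ with $\operatorname{rank}(x)=m$, $\operatorname{rank}(y)=n$, $xy=1$. Then $\pi$ has no proper invariant subgrids.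
   Context: $K[G]$ is the group ring; the rank of an element is the number of group elements with nonzero coefficient. $\pi\le\sigma$ means every block of $\pi$ is contained in a block of $\sigma$; $(i,j)\sim_\pi(i',j')$ means same block. $\pi$ is realizable with nonzero $r_i,s_j\in K$ if for each block $E$, $\sum_{(i,j)\in E}r_is_j$ equals $1$ if $(0,0)\in E$, else $0$. An invariant subgrid of a partition $\pi$ of $\{0,\dots,M-1\}\times\{0,\dots,N-1\}$ is a pair $(R,C)$ with $0\in R\subseteq\{0,\dots,M-1\}$, $0\in C\subseteq\{0,\dots,N-1\}$, $|R|\ge2$, $|C|\ge2$, such that whenever $(i,j)\in R\times C$ and $(i,j)\sim_\pi(i',j')$ then $(i',j')\in R\times C$; it is proper if $|R|<M$ or $|C|<N$. *)

From HB Require Import structures.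
From mathcomp Require Import all_boot all_order all_algebra.
Set Implicit Arguments. Unset Strict Implicit. Unset Printing Implicit Defensive.
Import GRing.Theory.

Local Open Scope ring_scope.

Definition division_ring (K : unitRingType) : Prop :=
  forall x : K, x != 0 -> x \is a GRing.unit.

Definition torsion_free (G : groupType) : Prop :=
  forall (g : G) (n : nat), (0 < n)%N -> (g ^+ n)%g = 1%g -> g = 1%g.

(* An element of the group ring K[G]: a finitely supported function
   G -> K, together with the duplicate-free list of its support. *)
Record grelt (K : unitRingType) (G : groupType) := GrElt {
  gcoef : G -> K;
  gsupp : seq G;
  gsupp_uniq : uniq gsupp;
  gsuppP : forall g, (g \in gsupp) = (gcoef g != 0)
}.

Definition grank (K : unitRingType) (G : groupType) (x : grelt K G) : nat :=
  size (gsupp x).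

Definition grmul (K : unitRingType) (G : groupType) (x y : grelt K G) : G -> K :=
  fun g => \sum_(a <- gsupp x) gcoef x a * gcoef y (a^-1 * g)%g.

Definition grone (K : unitRingType) (G : groupType) : G -> K :=
  fun g => (g == 1%g)%:R.

Definition gr_mul_is_one (K : unitRingType) (G : groupType) (x y : grelt K G) : Prop :=
  forall g, grmul x y g = @grone K G g.

Definition sigma_part (G : groupType) (M N : nat) (cs : 'I_M -> G) (ds : 'I_N -> G)
  : {set {set 'I_M * 'I_N}} :=
  [set [set q | (cs q.1 * ds q.2 == cs p.1 * ds p.2)%g] | p : 'I_M * 'I_N].

Definition part_le (T : finType) (P S : {set {set T}}) : Prop :=
  forall E, E \in P -> exists2 F, F \in S & E \subset F.

Definition has_origin (M N : nat) (E : {set 'I_M * 'I_N}) : bool :=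
  [exists p in E, (val p.1 == 0%N) && (val p.2 == 0%N)].

Definition realizable (K : unitRingType) (M N : nat) (P : {set {set 'I_M * 'I_N}})
  (r : 'I_M -> K) (s : 'I_N -> K) : Prop :=
  forall E, E \in P -> \sum_(p in E) r p.1 * s p.2 = (has_origin E)%:R.

Definition same_block (T : finType) (P : {set {set T}}) (p q : T) : Prop :=
  exists2 E, E \in P & (p \in E) && (q \in E).

Definition invariant_subgrid (M N : nat) (P : {set {set 'I_M * 'I_N}})
  (R : {set 'I_M}) (C : {set 'I_N}) : Prop :=
  [/\ forall i : 'I_M, val i = 0%N -> i \in R,
      forall j : 'I_N, val j = 0%N -> j \in C,
      (2 <= #|R|)%N, (2 <= #|C|)%N &
      forall p q : 'I_M * 'I_N, p.1 \in R -> p.2 \in C -> same_block P p q ->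
        (q.1 \in R) && (q.2 \in C)].

Definition proper_invariant_subgrid (M N : nat) (P : {set {set 'I_M * 'I_N}})
  (R : {set 'I_M}) (C : {set 'I_N}) : Prop :=
  invariant_subgrid P R C /\ ((#|R| < M)%N \/ (#|C| < N)%N).

From HB Require Import structures.
From mathcomp Require Import all_boot all_order all_algebra.
Set Implicit Arguments. Unset Strict Implicit. Unset Printing Implicit Defensive.
Local Open Scope ring_scope.
Import GRing.Theory.

(* Restricting c to the rows R and d to the columns C of an invariant subgrid
   gives elements x, y of ranks |R|, |C|.  The coefficient of g in xy is the
   sum of r_i s_j over the cells (i,j) of R x C with c_i d_j = g; since R x C
   is a union of blocks of pi and c_i d_j is constant on each block,
   realizability makes this sum 1 for g = 1 and 0 otherwise.  So xy = 1, and a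
   proper subgrid contradicts the minimality of (M, N). *)

Lemma sum_partition_closed_pred (R : pzSemiRingType) (T : finType)
    (P : {set {set T}}) (w : T -> R) (Q : pred T) (o : T) :
  partition P [set: T] ->
  (forall p q, same_block P p q -> Q p = Q q) ->
  (forall E, E \in P -> \sum_(p in E) w p = (o \in E)%:R) ->
  \sum_(p | Q p) w p = (Q o)%:R.
Proof.
move=> partP closedQ sumP.
have [coverP trivP _] := and3P partP.
have blockE E : E \in P ->
    \sum_(p in E | Q p) w p = ((o \in E) && Q o)%:R.
  move=> EP; have sameE p q : p \in E -> q \in E -> Q p = Q q.
    by move=> pE qE; apply: closedQ; exists E; rewrite ?pE.
  case: (pickP (fun p => (p \in E) && Q p)) => [p0 /andP [p0E Qp0] | noQ].
    transitivity (\sum_(p in E) w p).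
      by apply: eq_bigl => p; case: (boolP (p \in E)) => //= pE; rewrite (sameE p p0).
    rewrite sumP //; case: (boolP (o \in E)) => //= oE.
    by rewrite (sameE o p0 oE p0E) Qp0.
  rewrite big_pred0 // ; case: (boolP (o \in E)) => //= oE.
  by have := noQ o; rewrite oE /= => ->.
transitivity (\sum_(p in cover P) if Q p then w p else 0).
  by rewrite big_mkcond; apply: eq_bigl => p; rewrite (eqP coverP) inE.
rewrite big_trivIset //.
under eq_bigr => E EP do rewrite -big_mkcondr /= blockE //.
have oP : pblock P o \in P by rewrite pblock_mem // (eqP coverP) inE.
rewrite (bigD1 (pblock P o)) //= mem_pblock (eqP coverP) inE /=.
rewrite big1 ?addr0 // => E /andP [EP notE].
case: (boolP (o \in E)) => //= oE.
by move: notE; rewrite (def_pblock trivP EP oE) eqxx.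
Qed.

Section Restriction.
Variables (K : unitRingType) (G : groupType).

Section RestrictToSeq.
Variables (c : grelt K G) (s : seq G).

Definition grrestr_coef (g : G) : K := if g \in s then gcoef c g else 0.

Definition grrestr_supp : seq G := [seq g <- undup s | gcoef c g != 0].

Lemma grrestr_supp_uniq : uniq grrestr_supp.
Proof. by rewrite filter_uniq ?undup_uniq. Qed.

Lemma grrestr_suppP g : (g \in grrestr_supp) = (grrestr_coef g != 0).
Proof. by rewrite mem_filter mem_undup /grrestr_coef andbC; case: ifP; rewrite ?eqxx. Qed.

Definition grrestr : grelt K G := GrElt grrestr_supp_uniq grrestr_suppP.

Lemma gcoef_grrestr g : gcoef grrestr g = if g \in s then gcoef c g else 0.
Proof. by []. Qed.

Lemma gsupp_grrestr_sub : {subset gsupp grrestr <= s}.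
Proof. by move=> g; rewrite mem_filter mem_undup => /andP []. Qed.

Lemma grank_grrestr : uniq s -> {subset s <= gsupp c} -> grank grrestr = size s.
Proof.
move=> s_uniq s_supp; rewrite /grank /= /grrestr_supp undup_id //.
by congr size; apply/all_filterP/allP => g /s_supp; rewrite gsuppP.
Qed.

End RestrictToSeq.

Lemma grmul_seqE (x y : grelt K G) (s : seq G) g :
  uniq s -> {subset gsupp x <= s} ->
  grmul x y g = \sum_(a <- s) gcoef x a * gcoef y (a^-1 * g)%g.
Proof.
move=> s_uniq supp_s; rewrite (bigID (fun a => gcoef x a != 0)) /=.
rewrite [X in _ + X]big1 ?addr0 => [|a /negPn /eqP ->]; last by rewrite mul0r.
rewrite -big_filter; apply: perm_big; apply: uniq_perm.
- exact: gsupp_uniq.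
- exact: filter_uniq.
by move=> a; rewrite mem_filter -gsuppP; case: (boolP (a \in gsupp x)) => [/supp_s ->|].
Qed.

Section IndexedRestriction.
Variables (n : nat) (c : grelt K G) (cs : 'I_n -> G).
Hypothesis cs_inj : injective cs.

Lemma image_inj_uniq (R : {set 'I_n}) : uniq [seq cs i | i in R].
Proof. by rewrite map_inj_uniq ?enum_uniq. Qed.

Lemma grank_grrestr_image (R : {set 'I_n}) :
  (forall i, cs i \in gsupp c) -> grank (grrestr c [seq cs i | i in R]) = #|R|.
Proof.
move=> cs_supp; rewrite grank_grrestr ?image_inj_uniq ?size_map -?cardE //.
by move=> g /imageP [i _ ->].
Qed.

Lemma gcoef_grrestr_image (R : {set 'I_n}) g :
  gcoef (grrestr c [seq cs i | i in R]) g = \sum_(i in R | cs i == g) gcoef c (cs i).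
Proof.
rewrite gcoef_grrestr; case: ifP => [/imageP [i iR ->] | g_out].
  rewrite (big_pred1 i) // => k /=; rewrite (inj_eq cs_inj).
  by case: (k =P i) => [-> | _]; rewrite ?iR ?andbF.
rewrite big_pred0 // => i; apply/andP => [[iR /eqP cs_i]].
by move: g_out; rewrite -cs_i image_f.
Qed.

End IndexedRestriction.

Lemma grmul_grrestr_image (M N : nat) (c d : grelt K G)
    (cs : 'I_M -> G) (ds : 'I_N -> G) (R : {set 'I_M}) (C : {set 'I_N}) g :
  injective cs -> injective ds ->
  grmul (grrestr c [seq cs i | i in R]) (grrestr d [seq ds j | j in C]) g =
  \sum_(p in setX R C | (cs p.1 * ds p.2)%g == g) gcoef c (cs p.1) * gcoef d (ds p.2).
Proof.
move=> cs_inj ds_inj.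
rewrite (grmul_seqE _ g (image_inj_uniq cs_inj R) (@gsupp_grrestr_sub c _)).
rewrite big_image.
under eq_bigr => i iR.
  rewrite gcoef_grrestr image_f // gcoef_grrestr_image // big_distrr /=.
over.
rewrite pair_big_dep /=; apply: eq_bigl => -[i j] /=.
by rewrite in_setX -andbA -(can2_eq (mulKg (cs i)) (mulVKg (cs i))).
Qed.

End Restriction.

Section Grid.
Variables (M N : nat) (P : {set {set 'I_M * 'I_N}}).

Lemma has_originE (i0 : 'I_M) (j0 : 'I_N) E :
  val i0 = 0%N -> val j0 = 0%N -> has_origin E = ((i0, j0) \in E).
Proof.
move=> i00 j00; apply/existsP/idP => [[[i j] /and3P [ijE /eqP i0' /eqP j0']] | oE].
  have -> : i0 = i by apply: val_inj; rewrite /= i00 i0'.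
  by have -> : j0 = j by apply: val_inj; rewrite /= j00 j0'.
by exists (i0, j0); rewrite oE /= i00 j00.
Qed.

Lemma same_block_sym p q : same_block P p q -> same_block P q p.
Proof. by case=> E EP /andP [pE qE]; exists E; rewrite ?qE. Qed.

Lemma invariant_subgrid_closed (R : {set 'I_M}) (C : {set 'I_N}) p q :
  invariant_subgrid P R C -> same_block P p q -> (p \in setX R C) = (q \in setX R C).
Proof.
case=> _ _ _ _ closedRC pq; rewrite !inE.
apply/andP/andP => -[inR inC]; apply/andP.
  exact: closedRC pq.
exact: closedRC (same_block_sym pq).
Qed.

Lemma part_le_sigma_same_product (G : groupType) (cs : 'I_M -> G) (ds : 'I_N -> G) p q :
  part_le P (sigma_part cs ds) -> same_block P p q ->
  (cs p.1 * ds p.2 = cs q.1 * ds q.2)%g.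
Proof.
move=> le_sigma [E EP /andP [pE qE]]; have [F /imsetP [o _ ->] EF] := le_sigma E EP.
by move: (subsetP EF p pE) (subsetP EF q qE); rewrite !inE => /eqP -> /eqP ->.
Qed.

End Grid.

Lemma card_ge2_ord_gt0 (n : nat) (A : {set 'I_n}) : (2 <= #|A|)%N -> (0 < n)%N.
Proof. by move=> A2; rewrite -[n]card_ord (leq_trans (ltnW A2) (max_card A)). Qed.

Lemma gr_mul_is_one_grrestr (K : unitRingType) (G : groupType) (M N : nat)
    (c d : grelt K G) (cs : 'I_M -> G) (ds : 'I_N -> G)
    (P : {set {set 'I_M * 'I_N}}) (R : {set 'I_M}) (C : {set 'I_N}) :
  injective cs -> injective ds ->
  (forall i, val i = 0%N -> cs i = 1%g) -> (forall j, val j = 0%N -> ds j = 1%g) ->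
  partition P [set: 'I_M * 'I_N] -> part_le P (sigma_part cs ds) ->
  realizable P (fun i => gcoef c (cs i)) (fun j => gcoef d (ds j)) ->
  invariant_subgrid P R C ->
  gr_mul_is_one (grrestr c [seq cs i | i in R]) (grrestr d [seq ds j | j in C]).
Proof.
move=> cs_inj ds_inj cs0 ds0 partP le_sigma realP RC g.
have [R0 C0 R2 C2 _] := RC.
pose i0 := Ordinal (card_ge2_ord_gt0 R2); pose j0 := Ordinal (card_ge2_ord_gt0 C2).
rewrite grmul_grrestr_image // /grone.
rewrite (sum_partition_closed_pred
  (Q := fun p => (p \in setX R C) && ((cs p.1 * ds p.2)%g == g)) (o := (i0, j0)) partP).
- by rewrite in_setX R0 ?C0 //= cs0 ?ds0 // mulg1 eq_sym.
- move=> p q pq.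
  by rewrite (invariant_subgrid_closed RC pq) (part_le_sigma_same_product le_sigma pq).
- by move=> E EP; rewrite -(has_originE E (i0 := i0) (j0 := j0)) //; exact: realP.
Qed.

Theorem lemma6p9 (K : unitRingType) (M N : nat) (G : groupType)
  (c d : grelt K G) (cs : 'I_M -> G) (ds : 'I_N -> G)
  (P : {set {set 'I_M * 'I_N}}) :
  division_ring K ->
  (2 <= M)%N -> (2 <= N)%N ->
  torsion_free G ->
  grank c = M -> grank d = N ->
  1%g \in gsupp c -> 1%g \in gsupp d ->
  gr_mul_is_one c d ->
  injective cs -> (forall i, cs i \in gsupp c) -> (forall i, val i = 0%N -> cs i = 1%g) ->
  injective ds -> (forall j, ds j \in gsupp d) -> (forall j, val j = 0%N -> ds j = 1%g) ->
  partition P [set: 'I_M * 'I_N] ->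
  part_le P (sigma_part cs ds) ->
  realizable P (fun i => gcoef c (cs i)) (fun j => gcoef d (ds j)) ->
  (forall m n : nat, (2 <= m <= M)%N -> (2 <= n <= N)%N -> (m, n) <> (M, N) ->
     forall (G' : groupType), torsion_free G' ->
     forall x y : grelt K G', grank x = m -> grank y = n -> ~ gr_mul_is_one x y) ->
  ~ (exists (R : {set 'I_M}) (C : {set 'I_N}), proper_invariant_subgrid P R C).
Proof.
move=> _ _ _ torsionG _ _ _ _ _ cs_inj cs_supp cs0 ds_inj ds_supp ds0
  partP le_sigma realP minimal [R [C [RC proper]]].
have [_ _ R2 C2 _] := RC.
have R_le : (#|R| <= M)%N by have := max_card R; rewrite card_ord.
have C_le : (#|C| <= N)%N by have := max_card C; rewrite card_ord.
have not_full : (#|R|, #|C|) <> (M, N).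
  by case=> RM CN; case: proper; rewrite ?RM ?CN ltnn.
apply: (minimal _ _ _ _ not_full G torsionG _ _
  (grank_grrestr_image cs_inj R cs_supp) (grank_grrestr_image ds_inj C ds_supp)).
- by rewrite R2 R_le.
- by rewrite C2 C_le.
exact: gr_mul_is_one_grrestr cs_inj ds_inj cs0 ds0 partP le_sigma realP RC.
Qed.
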